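(* Let $\mathbb{F}$ be an algebraically closed field with $\mathrm{char}\,\mathbb{F}=2$, and let $\mathcal{A}$ be a (not necessarily unital) subalgebra of $\mathbf{O}$ with $\mathcal{A}\not\subseteq\mathbf{O}_0$ and $\dim\mathcal{A}\ge3$. Then there exists $g\in{\rm G}_2$ such that either (a) $\{e_1,e_2,\mathbf{u}_1\}\subseteq g\mathcal{A}$; or (b) $\{e_1,\mathbf{u}_1,\mathbf{v}_2\}\subseteq g\mathcal{A}$.
   Context: The split octonion algebra $\mathbf{O}$ is the 8-dimensional $\mathbb{F}$-vector space of formal matrices $a=\begin{pmatrix}\alpha&\mathbf{u}\\ \mathbf{v}&\beta\end{pmatrix}$ with $\alpha,\beta\in\mathbb{F}$, $\mathbf{u},\mathbf{v}\in\mathbb{F}^3$, with multiplication $\begin{pmatrix}\alpha&\mathbf{u}\\ \mathbf{v}&\beta\end{pmatrix}\begin{pmatrix}\alpha'&\mathbf{u}'\\ \mathbf{v}'&\beta'\end{pmatrix}=\begin{pmatrix}\alpha\alpha'+\mathbf{u}\cdot\mathbf{v}'&\alpha\mathbf{u}'+\beta'\mathbf{u}-\mathbf{v}\times\mathbf{v}'\\ \alpha'\mathbf{v}+\beta\mathbf{v}'+\mathbf{u}\times\mathbf{u}'&\beta\beta'+\mathbf{v}\cdot\mathbf{u}'\end{pmatrix}$ (dot product and cross product on $\mathbb{F}^3$). Trace $\mathrm{tr}(a)=\alpha+\beta$, $\mathbf{O}_0=\{a\in\mathbf{O}\mid\mathrm{tr}(a)=0\}$. With $\mathbf{c}_1,\mathbf{c}_2,\mathbf{c}_3$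 the standard basis of $\mathbb{F}^3$: $e_1$ has $\alpha=1$ and all else $0$, $e_2$ has $\beta=1$ and all else $0$, $\mathbf{u}_i$ has $\mathbf{u}=\mathbf{c}_i$ and all else $0$, $\mathbf{v}_i$ has $\mathbf{v}=\mathbf{c}_i$ and all else $0$. ${\rm G}_2=\mathrm{Aut}(\mathbf{O})$. *)

From HB Require Import structures.
From mathcomp Require Import all_boot all_order all_algebra all_field.
Set Implicit Arguments. Unset Strict Implicit. Unset Printing Implicit Defensive.
Import GRing.Theory.
Local Open Scope ring_scope.

(* Split octonions O over F, encoded as row vectors 'rV[F]_8 with coordinates
   [alpha; u1; u2; u3; v1; v2; v3; beta]. *)
Section Oct.
Variable F : fieldType.

Definition oct (a u1 u2 u3 v1 v2 v3 b : F) : 'rV[F]_8 :=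
  \row_(i < 8) nth 0 [:: a; u1; u2; u3; v1; v2; v3; b] i.

Definition ocoord (x : 'rV[F]_8) (k : nat) : F := x 0 (inord k).

Definition omul (x y : 'rV[F]_8) : 'rV[F]_8 :=
  let a := ocoord x 0 in let u1 := ocoord x 1 in let u2 := ocoord x 2 in
  let u3 := ocoord x 3 in let v1 := ocoord x 4 in let v2 := ocoord x 5 in
  let v3 := ocoord x 6 in let b := ocoord x 7 in
  let a' := ocoord y 0 in let u1' := ocoord y 1 in let u2' := ocoord y 2 in
  let u3' := ocoord y 3 in let v1' := ocoord y 4 in let v2' := ocoord y 5 in
  let v3' := ocoord y 6 in let b' := ocoord y 7 in
  oct (a * a' + (u1 * v1' + u2 * v2' + u3 * v3'))
      (a * u1' + b' * u1 - (v2 * v3' - v3 * v2'))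
      (a * u2' + b' * u2 - (v3 * v1' - v1 * v3'))
      (a * u3' + b' * u3 - (v1 * v2' - v2 * v1'))
      (a' * v1 + b * v1' + (u2 * u3' - u3 * u2'))
      (a' * v2 + b * v2' + (u3 * u1' - u1 * u3'))
      (a' * v3 + b * v3' + (u1 * u2' - u2 * u1'))
      (b * b' + (v1 * u1' + v2 * u2' + v3 * u3')).

Definition otr (x : 'rV[F]_8) : F := ocoord x 0 + ocoord x 7.

Definition oe1 : 'rV[F]_8 := oct 1 0 0 0 0 0 0 0.
Definition oe2 : 'rV[F]_8 := oct 0 0 0 0 0 0 0 1.
Definition ou1 : 'rV[F]_8 := oct 0 1 0 0 0 0 0 0.
Definition ov2 : 'rV[F]_8 := oct 0 0 0 0 0 1 0 0.

Definition is_subalgebra (A : {vspace 'rV[F]_8}) : Prop :=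
  forall x y, x \in A -> y \in A -> omul x y \in A.

Definition is_G2 (g : 'rV[F]_8 -> 'rV[F]_8) : Prop :=
  [/\ linear g, bijective g & forall x y, g (omul x y) = omul (g x) (g y)].

Definition in_image (g : 'rV[F]_8 -> 'rV[F]_8) (A : {vspace 'rV[F]_8}) z : Prop :=
  exists2 x, x \in A & g x = z.
End Oct.

From HB Require Import structures.
From mathcomp Require Import all_boot all_order all_algebra all_field.
From mathcomp Require Import ring.
Set Implicit Arguments. Unset Strict Implicit. Unset Printing Implicit Defensive.
Import GRing.Theory.
Local Open Scope ring_scope.

(* Every x in O satisfies x^2 = tr(x) x - n(x) 1.  In characteristic 2, x + l 1 has the
   trace of x, and a root l of l^2 + tr(x) l + n(x) makes its norm vanish; when n(x) != 0,
   1 = (tr(x) x - x^2) / n(x) lies in A.  Rescaling gives an idempotent of trace 1 in A,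
   which G2 moves to e1.
   Once e1 lies in A, the Peirce projections x |-> e1 x - (e1 x) e1 and
   x |-> x e1 - e1 (x e1) show that A contains the u- and v-parts of its elements.  If e2
   lies in A, an element outside span(e1, e2) yields a nonzero u- or v-vector, which SL3
   (after swapping e1 and e2 in the second case) moves to u1.  Otherwise u . v = 0 for
   all u-parts u and v-parts v, since v u = (u . v) e2; as the product of two u-vectors
   is the v-vector of their cross product (and vice versa), dim A >= 3 forces A to contain
   a nonzero u-vector u and a nonzero v-vector v, and SL3 maps u to u1 and v into F v2. *)

Lemma monic_quadratic_root (F : closedFieldType) (p q : F) :
  exists x, x ^+ 2 + p * x + q = 0.
Proof.
have [x xE] := @solve_monicpoly F 2 (nth 0 [:: - q; - p]) isT.
by exists x; rewrite xE !big_ord_recl big_ord0 /=; ring.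
Qed.

Lemma quadratic_eq1_root (F : closedFieldType) (d s : F) :
  (d != 0) || (s != 0) -> exists c, d * c ^+ 2 + s * c = 1.
Proof.
have [-> /= s_neq0 | d_neq0 _] := eqVneq d 0; first by exists s^-1; rewrite mul0r add0r mulfV.
have [c c_root] := monic_quadratic_root (s / d) (- d^-1).
exists c; transitivity (d * (c ^+ 2 + s / d * c + - d^-1) + 1); first by field.
by rewrite c_root mulr0 add0r.
Qed.

Lemma exists_notin_span2 (K : fieldType) (vT : vectType K) (U : {vspace vT}) (x y : vT) :
  (3 <= \dim U)%N -> exists2 z, z \in U & z \notin <<[:: x; y]>>%VS.
Proof.
move=> dimU; apply/subvPn/negP => /dimvS dimUxy.
by have := leq_trans dimU (leq_trans dimUxy (dim_span [:: x; y])).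
Qed.

Lemma memv_span2 (K : fieldType) (vT : vectType K) (x y : vT) (a b : K) :
  a *: x + b *: y \in <<[:: x; y]>>%VS.
Proof. by rewrite span_cons span_seq1 memv_add ?memvZ ?memv_line. Qed.

Lemma memvZ_notin_eq0 (K : fieldType) (vT : vectType K) (U : {vspace vT}) (v : vT) (c : K) :
  v \notin U -> c *: v \in U -> c = 0.
Proof.
move=> vU cvU; apply/eqP; apply: contraNT vU => c_neq0.
by rewrite -[v]scale1r -(mulVf c_neq0) -scalerA memvZ.
Qed.

Section Vectors3.
Variable F : fieldType.

Definition dot3 (x1 x2 x3 y1 y2 y3 : F) := x1 * y1 + x2 * y2 + x3 * y3.
Definition cross1 (x1 x2 x3 y1 y2 y3 : F) := x2 * y3 - x3 * y2.
Definition cross2 (x1 x2 x3 y1 y2 y3 : F) := x3 * y1 - x1 * y3.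
Definition cross3 (x1 x2 x3 y1 y2 y3 : F) := x1 * y2 - x2 * y1.

Definition det3 (a1 a2 a3 b1 b2 b3 c1 c2 c3 : F) :=
  dot3 a1 a2 a3 (cross1 b1 b2 b3 c1 c2 c3) (cross2 b1 b2 b3 c1 c2 c3)
    (cross3 b1 b2 b3 c1 c2 c3).

Definition nonzero3 (x1 x2 x3 : F) := [|| x1 != 0, x2 != 0 | x3 != 0].

Lemma nonzero3Fn (x1 x2 x3 : F) : ~~ nonzero3 x1 x2 x3 -> [/\ x1 = 0, x2 = 0 & x3 = 0].
Proof. by rewrite /nonzero3 !negb_or !negbK => /and3P [/eqP -> /eqP -> /eqP ->]. Qed.

Lemma exists_dot3_neq0 (w1 w2 w3 : F) : nonzero3 w1 w2 w3 ->
  exists e1 e2 e3, dot3 e1 e2 e3 w1 w2 w3 != 0.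
Proof.
rewrite /dot3; case/or3P => w_neq0.
- by exists 1, 0, 0; have -> : 1 * w1 + 0 * w2 + 0 * w3 = w1 by ring.
- by exists 0, 1, 0; have -> : 0 * w1 + 1 * w2 + 0 * w3 = w2 by ring.
- by exists 0, 0, 1; have -> : 0 * w1 + 0 * w2 + 1 * w3 = w3 by ring.
Qed.

Lemma exists_det3_neq0 (u1 u2 u3 : F) : nonzero3 u1 u2 u3 ->
  exists b1 b2 b3 c1 c2 c3, det3 u1 u2 u3 b1 b2 b3 c1 c2 c3 != 0.
Proof.
rewrite /det3 /dot3 /cross1 /cross2 /cross3; case/or3P => u_neq0.
- by exists 0, 1, 0, 0, 0, 1; have -> : u1 * (1 * 1 - 0 * 0) + u2 * (0 * 0 - 0 * 1)
    + u3 * (0 * 0 - 1 * 0) = u1 by ring.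
- by exists 0, 0, 1, 1, 0, 0; have -> : u1 * (0 * 0 - 1 * 0) + u2 * (1 * 1 - 0 * 0)
    + u3 * (0 * 0 - 0 * 1) = u2 by ring.
- by exists 1, 0, 0, 0, 1, 0; have -> : u1 * (0 * 0 - 0 * 1) + u2 * (0 * 0 - 1 * 0)
    + u3 * (1 * 1 - 0 * 0) = u3 by ring.
Qed.

Lemma det3_cross (u1 u2 u3 b1 b2 b3 e1 e2 e3 v1 v2 v3 : F) :
  det3 u1 u2 u3 b1 b2 b3 (cross1 e1 e2 e3 v1 v2 v3) (cross2 e1 e2 e3 v1 v2 v3)
    (cross3 e1 e2 e3 v1 v2 v3) =
  dot3 e1 e2 e3 u1 u2 u3 * dot3 b1 b2 b3 v1 v2 v3
  - dot3 b1 b2 b3 e1 e2 e3 * dot3 u1 u2 u3 v1 v2 v3.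
Proof. by rewrite /det3 /dot3 /cross1 /cross2 /cross3; ring. Qed.

Lemma dot3_cross (e1 e2 e3 v1 v2 v3 : F) :
  dot3 (cross1 e1 e2 e3 v1 v2 v3) (cross2 e1 e2 e3 v1 v2 v3) (cross3 e1 e2 e3 v1 v2 v3)
    v1 v2 v3 = 0.
Proof. by rewrite /dot3 /cross1 /cross2 /cross3; ring. Qed.

Lemma exists_det3_orth (u1 u2 u3 v1 v2 v3 : F) :
  nonzero3 u1 u2 u3 -> nonzero3 v1 v2 v3 -> dot3 u1 u2 u3 v1 v2 v3 = 0 ->
  exists b1 b2 b3 c1 c2 c3, [/\ det3 u1 u2 u3 b1 b2 b3 c1 c2 c3 != 0,
    dot3 b1 b2 b3 v1 v2 v3 != 0 & dot3 c1 c2 c3 v1 v2 v3 = 0].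
Proof.
move=> /exists_dot3_neq0 [e1 [e2 [e3 eu_neq0]]] /exists_dot3_neq0 [b1 [b2 [b3 bv_neq0]]] uv0.
exists b1, b2, b3, (cross1 e1 e2 e3 v1 v2 v3), (cross2 e1 e2 e3 v1 v2 v3),
  (cross3 e1 e2 e3 v1 v2 v3).
by rewrite det3_cross dot3_cross uv0 mulr0 subr0 mulf_neq0.
Qed.

Lemma cross_eq0_parallel (u1 u2 u3 w1 w2 w3 : F) : nonzero3 u1 u2 u3 ->
  cross1 u1 u2 u3 w1 w2 w3 = 0 -> cross2 u1 u2 u3 w1 w2 w3 = 0 ->
  cross3 u1 u2 u3 w1 w2 w3 = 0 ->
  exists k, [/\ w1 = k * u1, w2 = k * u2 & w3 = k * u3].
Proof.
have solve (p q r s : F) : p != 0 -> p * q = r * s -> q = s / p * r.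
  by move=> p_neq0 pq; rewrite -[q](mulKf p_neq0) pq; ring.
rewrite /cross1 /cross2 /cross3 => u_neq0 /subr0_eq u2w3 /subr0_eq u3w1 /subr0_eq u1w2.
case/or3P: u_neq0 => ui_neq0.
- by exists (w1 / u1); split; [field | exact: solve | apply: solve => //; rewrite u3w1].
- by exists (w2 / u2); split; [apply: solve => //; rewrite u1w2 | field | exact: solve].
- by exists (w3 / u3); split; [exact: solve | apply: solve => //; rewrite u2w3 | field].
Qed.

End Vectors3.

Ltac oct_ring := rewrite /dot3 /cross1 /cross2 /cross3; congr oct; ring.

Section Octonions.
Variable F : fieldType.
Local Notation O := 'rV[F]_8.

Lemma ocoord_oct (a u1 u2 u3 v1 v2 v3 b : F) k : (k < 8)%N ->
  ocoord (oct a u1 u2 u3 v1 v2 v3 b) k = nth 0 [:: a; u1; u2; u3; v1; v2; v3; b] k.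
Proof. by move=> lt_k8; rewrite /ocoord /oct mxE inordK. Qed.

Lemma octE (x : O) : x = oct (ocoord x 0) (ocoord x 1) (ocoord x 2) (ocoord x 3)
  (ocoord x 4) (ocoord x 5) (ocoord x 6) (ocoord x 7).
Proof.
apply/rowP => i; rewrite /oct mxE /ocoord.
by case: i => -[|[|[|[|[|[|[|[|//]]]]]]]] lt_i8; congr (x 0 _); apply/val_inj; rewrite /= inordK.
Qed.

Lemma oct_ind (P : O -> Prop) :
  (forall a u1 u2 u3 v1 v2 v3 b, P (oct a u1 u2 u3 v1 v2 v3 b)) -> forall x, P x.
Proof. by move=> Poct x; rewrite (octE x). Qed.

Lemma octD (a u1 u2 u3 v1 v2 v3 b a' u1' u2' u3' v1' v2' v3' b' : F) :
  oct a u1 u2 u3 v1 v2 v3 b + oct a' u1' u2' u3' v1' v2' v3' b' =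
  oct (a + a') (u1 + u1') (u2 + u2') (u3 + u3') (v1 + v1') (v2 + v2') (v3 + v3') (b + b').
Proof. by apply/rowP => i; rewrite !mxE; case: i => -[|[|[|[|[|[|[|[|//]]]]]]]]. Qed.

Lemma octZ (c a u1 u2 u3 v1 v2 v3 b : F) :
  c *: oct a u1 u2 u3 v1 v2 v3 b =
  oct (c * a) (c * u1) (c * u2) (c * u3) (c * v1) (c * v2) (c * v3) (c * b).
Proof. by apply/rowP => i; rewrite !mxE; case: i => -[|[|[|[|[|[|[|[|//]]]]]]]]. Qed.

Lemma octN (a u1 u2 u3 v1 v2 v3 b : F) :
  - oct a u1 u2 u3 v1 v2 v3 b =
  oct (- a) (- u1) (- u2) (- u3) (- v1) (- v2) (- v3) (- b).
Proof. by apply/rowP => i; rewrite !mxE; case: i => -[|[|[|[|[|[|[|[|//]]]]]]]]. Qed.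

Lemma omul_oct (a u1 u2 u3 v1 v2 v3 b a' u1' u2' u3' v1' v2' v3' b' : F) :
  omul (oct a u1 u2 u3 v1 v2 v3 b) (oct a' u1' u2' u3' v1' v2' v3' b') =
  oct (a * a' + (u1 * v1' + u2 * v2' + u3 * v3'))
      (a * u1' + b' * u1 - (v2 * v3' - v3 * v2'))
      (a * u2' + b' * u2 - (v3 * v1' - v1 * v3'))
      (a * u3' + b' * u3 - (v1 * v2' - v2 * v1'))
      (a' * v1 + b * v1' + (u2 * u3' - u3 * u2'))
      (a' * v2 + b * v2' + (u3 * u1' - u1 * u3'))
      (a' * v3 + b * v3' + (u1 * u2' - u2 * u1'))
      (b * b' + (v1 * u1' + v2 * u2' + v3 * u3')).
Proof. by rewrite /omul !ocoord_oct. Qed.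

Lemma omulZ (c d : F) (x y : O) : omul (c *: x) (d *: y) = (c * d) *: omul x y.
Proof.
elim/oct_ind: x => a u1 u2 u3 v1 v2 v3 b; elim/oct_ind: y => a' u1' u2' u3' v1' v2' v3' b'.
by rewrite (octZ c) (octZ d) !omul_oct octZ; congr oct; ring.
Qed.

Lemma otr_oct (a u1 u2 u3 v1 v2 v3 b : F) : otr (oct a u1 u2 u3 v1 v2 v3 b) = a + b.
Proof. by rewrite /otr !ocoord_oct. Qed.

Lemma otrZ (c : F) (x : O) : otr (c *: x) = c * otr x.
Proof. by elim/oct_ind: x => a u1 u2 u3 v1 v2 v3 b; rewrite octZ !otr_oct mulrDr. Qed.

Definition oct_map (f : F -> F -> F -> F -> F -> F -> F -> F -> O) (x : O) : O :=
  f (ocoord x 0) (ocoord x 1) (ocoord x 2) (ocoord x 3)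
    (ocoord x 4) (ocoord x 5) (ocoord x 6) (ocoord x 7).

Lemma oct_mapE f (a u1 u2 u3 v1 v2 v3 b : F) :
  oct_map f (oct a u1 u2 u3 v1 v2 v3 b) = f a u1 u2 u3 v1 v2 v3 b.
Proof. by rewrite /oct_map !ocoord_oct. Qed.

Definition oone : O := oct 1 0 0 0 0 0 0 1.
Definition ouvec (u1 u2 u3 : F) : O := oct 0 u1 u2 u3 0 0 0 0.
Definition ovvec (v1 v2 v3 : F) : O := oct 0 0 0 0 v1 v2 v3 0.

Definition onorm (x : O) : F :=
  ocoord x 0 * ocoord x 7 - dot3 (ocoord x 1) (ocoord x 2) (ocoord x 3)
                                 (ocoord x 4) (ocoord x 5) (ocoord x 6).

Lemma omul_self (x : O) : omul x x = otr x *: x - onorm x *: oone.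
Proof.
elim/oct_ind: x => a u1 u2 u3 v1 v2 v3 b.
by rewrite omul_oct otr_oct /onorm !ocoord_oct //= /oone !octZ octN octD; oct_ring.
Qed.

Lemma onorm_add_oone (x : O) (l : F) :
  onorm (x + l *: oone) = l ^+ 2 + otr x * l + onorm x.
Proof.
elim/oct_ind: x => a u1 u2 u3 v1 v2 v3 b.
by rewrite /oone octZ octD /onorm otr_oct !ocoord_oct //= /dot3; ring.
Qed.

Lemma otr_add_oone (x : O) (l : F) : otr (x + l *: oone) = otr x + l *+ 2.
Proof. by elim/oct_ind: x => a u1 u2 u3 v1 v2 v3 b; rewrite /oone octZ octD !otr_oct; ring. Qed.

Lemma omul_ouvec (x1 x2 x3 y1 y2 y3 : F) : omul (ouvec x1 x2 x3) (ouvec y1 y2 y3) =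
  ovvec (cross1 x1 x2 x3 y1 y2 y3) (cross2 x1 x2 x3 y1 y2 y3) (cross3 x1 x2 x3 y1 y2 y3).
Proof. by rewrite omul_oct; oct_ring. Qed.

Lemma omul_ovvec (x1 x2 x3 y1 y2 y3 : F) : omul (ovvec x1 x2 x3) (ovvec y1 y2 y3) =
  ouvec (cross1 y1 y2 y3 x1 x2 x3) (cross2 y1 y2 y3 x1 x2 x3) (cross3 y1 y2 y3 x1 x2 x3).
Proof. by rewrite omul_oct; oct_ring. Qed.

Lemma omul_ovvec_ouvec (v1 v2 v3 u1 u2 u3 : F) :
  omul (ovvec v1 v2 v3) (ouvec u1 u2 u3) = oct 0 0 0 0 0 0 0 (dot3 u1 u2 u3 v1 v2 v3).
Proof. by rewrite omul_oct; oct_ring. Qed.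

Lemma notin_span_e1e2 (a u1 u2 u3 v1 v2 v3 b : F) :
  oct a u1 u2 u3 v1 v2 v3 b \notin <<[:: oe1 F; oe2 F]>>%VS ->
  nonzero3 u1 u2 u3 \/ nonzero3 v1 v2 v3.
Proof.
move=> x_notin; apply/orP; apply: contraR x_notin.
case/norP=> /nonzero3Fn [-> -> ->] /nonzero3Fn [-> -> ->].
have -> : oct a 0 0 0 0 0 0 b = a *: oe1 F + b *: oe2 F by rewrite /oe1 /oe2 !octZ octD; oct_ring.
exact: memv_span2.
Qed.

End Octonions.

Ltac oct_map_reduce := match goal with
  | |- forall c x y, _ =>
    move=> ?; elim/oct_ind => ? ? ? ? ? ? ? ?; elim/oct_ind => ? ? ? ? ? ? ? ?;
    rewrite octZ octD !oct_mapE /= octZ octD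
  | |- cancel _ _ =>
    rewrite /cancel; elim/oct_ind => ? ? ? ? ? ? ? ?; rewrite oct_mapE /= oct_mapE /=
  | |- forall x y, _ =>
    elim/oct_ind => ? ? ? ? ? ? ? ?; elim/oct_ind => ? ? ? ? ? ? ? ?;
    rewrite omul_oct !oct_mapE /= omul_oct
  end.

Section Automorphisms.
Variable F : fieldType.
Local Notation O := 'rV[F]_8.

Lemma is_G2_intro (g g' : O -> O) :
  (forall c x y, g (c *: x + y) = c *: g x + g y) -> cancel g g' -> cancel g' g ->
  (forall x y, g (omul x y) = omul (g x) (g y)) -> is_G2 g.
Proof. by move=> glin gK g'K gmul; split=> //; exists g'. Qed.

Lemma is_G2_comp (g h : O -> O) : is_G2 g -> is_G2 h -> is_G2 (h \o g).
Proof.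
case=> glin gbij gmul [hlin hbij hmul]; split; last by move=> x y /=; rewrite gmul hmul.
- by move=> c x y /=; rewrite glin hlin.
- exact: bij_comp.
Qed.

Lemma is_G2_linear (g : O -> O) : is_G2 g -> exists gL : {linear O -> O}, gL =1 g.
Proof.
case=> glin _ _; pose gL : {linear O -> O} := HB.pack g (GRing.isLinear.Build _ _ _ _ g glin).
by exists gL.
Qed.

Lemma is_G2Z (g : O -> O) (c : F) (x : O) : is_G2 g -> g (c *: x) = c *: g x.
Proof. by case/is_G2_linear=> gL gLE; rewrite -!gLE linearZ. Qed.

(* The unipotent automorphisms with e1 |-> e1 + ouvec w, resp. e1 |-> e1 + ovvec w. *)
Definition transvU (w1 w2 w3 : F) : O -> O := oct_map (fun a u1 u2 u3 v1 v2 v3 b =>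
  oct (a - dot3 w1 w2 w3 v1 v2 v3)
      (u1 + (a - b) * w1 - dot3 w1 w2 w3 v1 v2 v3 * w1)
      (u2 + (a - b) * w2 - dot3 w1 w2 w3 v1 v2 v3 * w2)
      (u3 + (a - b) * w3 - dot3 w1 w2 w3 v1 v2 v3 * w3)
      (v1 + cross1 w1 w2 w3 u1 u2 u3) (v2 + cross2 w1 w2 w3 u1 u2 u3)
      (v3 + cross3 w1 w2 w3 u1 u2 u3)
      (b + dot3 w1 w2 w3 v1 v2 v3)).

Definition transvV (w1 w2 w3 : F) : O -> O := oct_map (fun a u1 u2 u3 v1 v2 v3 b =>
  oct (a - dot3 w1 w2 w3 u1 u2 u3)
      (u1 + cross1 w1 w2 w3 v1 v2 v3) (u2 + cross2 w1 w2 w3 v1 v2 v3)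
      (u3 + cross3 w1 w2 w3 v1 v2 v3)
      (v1 + (a - b) * w1 - dot3 w1 w2 w3 u1 u2 u3 * w1)
      (v2 + (a - b) * w2 - dot3 w1 w2 w3 u1 u2 u3 * w2)
      (v3 + (a - b) * w3 - dot3 w1 w2 w3 u1 u2 u3 * w3)
      (b + dot3 w1 w2 w3 u1 u2 u3)).

Definition oswap : O -> O := oct_map (fun a u1 u2 u3 v1 v2 v3 b =>
  oct b (- v1) (- v2) (- v3) (- u1) (- u2) (- u3) a).

Lemma transvU_G2 (w1 w2 w3 : F) : is_G2 (transvU w1 w2 w3).
Proof.
by apply: (@is_G2_intro _ (transvU (- w1) (- w2) (- w3))); rewrite /transvU;
  oct_map_reduce; oct_ring.
Qed.

Lemma transvV_G2 (w1 w2 w3 : F) : is_G2 (transvV w1 w2 w3).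
Proof.
by apply: (@is_G2_intro _ (transvV (- w1) (- w2) (- w3))); rewrite /transvV;
  oct_map_reduce; oct_ring.
Qed.

Lemma oswap_G2 : is_G2 oswap.
Proof. by apply: (@is_G2_intro _ oswap); rewrite /oswap; oct_map_reduce; oct_ring. Qed.

Lemma oswap_oe1 : oswap (oe1 F) = oe2 F.
Proof. by rewrite /oswap oct_mapE /= !oppr0. Qed.

Lemma oswap_oe2 : oswap (oe2 F) = oe1 F.
Proof. by rewrite /oswap oct_mapE /= !oppr0. Qed.

Lemma oswap_ovvec (v1 v2 v3 : F) : oswap (ovvec v1 v2 v3) = ouvec (- v1) (- v2) (- v3).
Proof. by rewrite /oswap oct_mapE /= !oppr0. Qed.

Section Frame.
Variables a1 a2 a3 b1 b2 b3 c1 c2 c3 : F.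
Let d := det3 a1 a2 a3 b1 b2 b3 c1 c2 c3.
Let B1 := b1 / d.
Let B2 := b2 / d.
Let B3 := b3 / d.

(* SL3 acting by u |-> M^-1 u and v |-> M^T v, where M has the columns a, b / d and c,
   so that det M = 1. *)
Definition frame_map : O -> O := oct_map (fun a u1 u2 u3 v1 v2 v3 b =>
  oct a (dot3 (cross1 B1 B2 B3 c1 c2 c3) (cross2 B1 B2 B3 c1 c2 c3)
              (cross3 B1 B2 B3 c1 c2 c3) u1 u2 u3)
        (dot3 (cross1 c1 c2 c3 a1 a2 a3) (cross2 c1 c2 c3 a1 a2 a3)
              (cross3 c1 c2 c3 a1 a2 a3) u1 u2 u3)
        (dot3 (cross1 a1 a2 a3 B1 B2 B3) (cross2 a1 a2 a3 B1 B2 B3)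
              (cross3 a1 a2 a3 B1 B2 B3) u1 u2 u3)
        (dot3 a1 a2 a3 v1 v2 v3) (dot3 B1 B2 B3 v1 v2 v3) (dot3 c1 c2 c3 v1 v2 v3) b).

Let frame_inv : O -> O := oct_map (fun a u1 u2 u3 v1 v2 v3 b =>
  oct a (u1 * a1 + u2 * B1 + u3 * c1) (u1 * a2 + u2 * B2 + u3 * c2)
        (u1 * a3 + u2 * B3 + u3 * c3)
        (v1 * cross1 B1 B2 B3 c1 c2 c3 + v2 * cross1 c1 c2 c3 a1 a2 a3
           + v3 * cross1 a1 a2 a3 B1 B2 B3)
        (v1 * cross2 B1 B2 B3 c1 c2 c3 + v2 * cross2 c1 c2 c3 a1 a2 a3
           + v3 * cross2 a1 a2 a3 B1 B2 B3)
        (v1 * cross3 B1 B2 B3 c1 c2 c3 + v2 * cross3 c1 c2 c3 a1 a2 a3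
           + v3 * cross3 a1 a2 a3 B1 B2 B3)
        b).

Hypothesis d_neq0 : d != 0.

Lemma frame_map_G2 : is_G2 frame_map.
Proof.
move: d_neq0; rewrite /d /det3 /dot3 /cross1 /cross2 /cross3 => det_neq0.
by apply: (@is_G2_intro _ frame_inv); rewrite /frame_map /frame_inv; oct_map_reduce;
  rewrite /B1 /B2 /B3 /d /det3 /dot3 /cross1 /cross2 /cross3; congr oct; field.
Qed.

Lemma frame_map_oe1 : frame_map (oe1 F) = oe1 F.
Proof. by rewrite /frame_map oct_mapE /=; oct_ring. Qed.

Lemma frame_map_oe2 : frame_map (oe2 F) = oe2 F.
Proof. by rewrite /frame_map oct_mapE /=; oct_ring. Qed.

Lemma frame_map_ouvec : frame_map (ouvec a1 a2 a3) = ou1 F.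
Proof.
move: d_neq0; rewrite /d /det3 /dot3 /cross1 /cross2 /cross3 => det_neq0.
by rewrite /frame_map oct_mapE /= /B1 /B2 /B3 /d /det3 /dot3 /cross1 /cross2 /cross3;
  congr oct; field.
Qed.

Lemma frame_map_ovvec (v1 v2 v3 : F) : frame_map (ovvec v1 v2 v3) =
  ovvec (dot3 a1 a2 a3 v1 v2 v3) (dot3 b1 b2 b3 v1 v2 v3 / d) (dot3 c1 c2 c3 v1 v2 v3).
Proof. by rewrite /frame_map oct_mapE /= /B1 /B2 /B3; oct_ring. Qed.

End Frame.

End Automorphisms.

Lemma idempotent_v0_conj_e1 (F : fieldType) (a u1 u2 u3 b : F) : a + b = 1 ->
  omul (oct a u1 u2 u3 0 0 0 b) (oct a u1 u2 u3 0 0 0 b) = oct a u1 u2 u3 0 0 0 b ->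
  exists2 g, is_G2 g & g (oct a u1 u2 u3 0 0 0 b) = oe1 F.
Proof.
move=> ab1 /(congr1 (fun x => ocoord x 0)); rewrite omul_oct !ocoord_oct //= !mulr0 !addr0.
move=> aa; have /orP[/eqP a0 | /eqP/subr0_eq a1]: (a == 0) || (a - 1 == 0).
  by rewrite -mulf_eq0 mulrBr aa mulr1 subrr.
- have b1 : b = 1 by rewrite -ab1 a0 add0r.
  exists (transvV u1 u2 u3 \o oswap (F:=F)).
    exact: is_G2_comp (oswap_G2 F) (transvV_G2 _ _ _).
  by rewrite /= /oswap oct_mapE /= /transvV oct_mapE /= a0 b1; oct_ring.
- have b0 : b = 0 by apply: (addrI a); rewrite ab1 a1 addr0.
  exists (transvU (- u1) (- u2) (- u3)); first exact: transvU_G2.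
  by rewrite /transvU oct_mapE /= a1 b0; oct_ring.
Qed.

Lemma idempotent_conj_v0 (F : closedFieldType) (e : 'rV[F]_8) : omul e e = e -> otr e = 1 ->
  exists2 g, is_G2 g & exists a u1 u2 u3 b, g e = oct a u1 u2 u3 0 0 0 b /\ a + b = 1.
Proof.
elim/oct_ind: e => a u1 u2 u3 v1 v2 v3 b ee; rewrite otr_oct => ab1.
have aa : a * a + dot3 u1 u2 u3 v1 v2 v3 = a.
  by move/(congr1 (fun x => ocoord x 0)): ee; rewrite omul_oct !ocoord_oct.
have discr : (a - b) ^+ 2 + 4 * dot3 u1 u2 u3 v1 v2 v3 = 1.
  have b_eq : b = 1 - a by rewrite -ab1 addrAC subrr add0r.
  have uv_eq : dot3 u1 u2 u3 v1 v2 v3 = a - a * a by rewrite -{1}aa addrAC subrr add0r.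
  by rewrite b_eq uv_eq; ring.
have [c c_root] : exists c, dot3 u1 u2 u3 v1 v2 v3 * c ^+ 2 + (a - b) * c = 1.
  apply: quadratic_eq1_root; rewrite -negb_and; apply/negP => /andP[/eqP uv0 /eqP ab0].
  by move: discr; rewrite uv0 ab0 expr0n /= mulr0 addr0 => /eqP; rewrite eq_sym oner_eq0.
have v_killed vi : vi + (a - b) * (- c * vi)
    - dot3 (- c * v1) (- c * v2) (- c * v3) u1 u2 u3 * (- c * vi) = 0.
  transitivity (vi * (1 - (dot3 u1 u2 u3 v1 v2 v3 * c ^+ 2 + (a - b) * c))).
    by rewrite /dot3; ring.
  by rewrite c_root subrr mulr0.
exists (transvV (- c * v1) (- c * v2) (- c * v3)); first exact: transvV_G2.
rewrite /transvV oct_mapE /=; do 5 eexists; split; first by congr oct; apply: v_killed.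
by transitivity (a + b); [ring | exact: ab1].
Qed.

Lemma idempotent_conj_e1 (F : closedFieldType) (e : 'rV[F]_8) : omul e e = e -> otr e = 1 ->
  exists2 g, is_G2 g & g e = oe1 F.
Proof.
move=> ee tr1; have [g Gg [a [u1 [u2 [u3 [b [ge ab1]]]]]]] := idempotent_conj_v0 ee tr1.
have gee : omul (g e) (g e) = g e by case: Gg => _ _ <-; rewrite ee.
rewrite ge in gee; have [h Gh hge] := idempotent_v0_conj_e1 ab1 gee.
by exists (h \o g); [exact: is_G2_comp Gg Gh | rewrite /= ge].
Qed.

Lemma char2_exists_trace1_idempotent (F : closedFieldType) (A : {vspace 'rV[F]_8})
    (x : 'rV[F]_8) :
  (2 \in [pchar F])%N -> is_subalgebra A -> x \in A -> otr x != 0 ->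
  exists2 e, e \in A & omul e e = e /\ otr e = 1.
Proof.
move=> char2 Asub xA tr_neq0.
have [l yA y_norm0] : exists2 l, x + l *: oone F \in A & onorm (x + l *: oone F) = 0.
  have [n0 | n_neq0] := eqVneq (onorm x) 0; first by exists 0; rewrite scale0r addr0.
  have oneA : oone F \in A.
    have -> : oone F = (onorm x)^-1 *: (otr x *: x - omul x x).
      by rewrite omul_self opprB addrC subrK scalerA mulVf ?scale1r.
    by rewrite memvZ // memvB ?memvZ // Asub.
  have [l l_root] := monic_quadratic_root (otr x) (onorm x).
  by exists l; rewrite ?onorm_add_oone // memvD ?memvZ.
have y_tr : otr (x + l *: oone F) = otr x.
  by rewrite otr_add_oone -mulr_natr (pcharf0 char2) mulr0 addr0.
exists ((otr x)^-1 *: (x + l *: oone F)); first exact: memvZ.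
split; last by rewrite otrZ y_tr mulVf.
by rewrite omulZ omul_self y_norm0 y_tr scale0r subr0 scalerA -mulrA mulVf ?mulr1.
Qed.

Lemma G2_image_subalgebra (F : fieldType) (g : 'rV[F]_8 -> 'rV[F]_8) (A : {vspace 'rV[F]_8}) :
  is_G2 g -> is_subalgebra A ->
  exists B : {vspace 'rV[F]_8}, [/\ is_subalgebra B, \dim B = \dim A,
    {in A, forall x, g x \in B} & forall h z, in_image h B z -> in_image (h \o g) A z].
Proof.
move=> Gg Asub; have [_ /bij_inj ginj gmul] := Gg; have [gL gLE] := is_G2_linear Gg.
have memB z : z \in (linfun gL @: A)%VS <-> in_image g A z.
  split=> [/memv_imgP [x xA ->] | [x xA <-]]; first by exists x; rewrite ?lfunE.
  by rewrite -gLE -lfunE memv_img.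
exists (linfun gL @: A)%VS; split.
- move=> y z /memB [x xA <-] /memB [x' x'A <-]; apply/memB.
  by exists (omul x x'); [exact: Asub | exact: gmul].
- apply: limg_dim_eq; suff /lker0P/eqP -> : injective (linfun gL) by rewrite capv0.
  by move=> x y; rewrite !lfunE !gLE => /ginj.
- by move=> x xA; apply/memB; exists x.
- by move=> h z [y /memB [x xA <-] <-]; exists x.
Qed.
Section SubalgebraContainingE1.
Variable F : fieldType.
Local Notation O := 'rV[F]_8.
Variable B : {vspace O}.
Hypotheses (Bsub : is_subalgebra B) (e1B : oe1 F \in B).

Lemma ouvec_mem (a u1 u2 u3 v1 v2 v3 b : F) :
  oct a u1 u2 u3 v1 v2 v3 b \in B -> ouvec u1 u2 u3 \in B.
Proof.
set x := oct _ _ _ _ _ _ _ _ => xB.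
suff -> : ouvec u1 u2 u3 = omul (oe1 F) x - omul (omul (oe1 F) x) (oe1 F).
  by apply: memvB; [exact: Bsub | apply: Bsub => //; exact: Bsub].
by rewrite /x /oe1 !omul_oct octN octD; oct_ring.
Qed.

Lemma ovvec_mem (a u1 u2 u3 v1 v2 v3 b : F) :
  oct a u1 u2 u3 v1 v2 v3 b \in B -> ovvec v1 v2 v3 \in B.
Proof.
set x := oct _ _ _ _ _ _ _ _ => xB.
suff -> : ovvec v1 v2 v3 = omul x (oe1 F) - omul (oe1 F) (omul x (oe1 F)).
  by apply: memvB; [exact: Bsub | apply: Bsub => //; exact: Bsub].
by rewrite /x /oe1 !omul_oct octN octD; oct_ring.
Qed.

Lemma scale_oe2_mem (a u1 u2 u3 v1 v2 v3 b : F) :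
  oct a u1 u2 u3 v1 v2 v3 b \in B -> b *: oe2 F \in B.
Proof.
set x := oct _ _ _ _ _ _ _ _ => xB.
suff -> : b *: oe2 F =
    x - omul (oe1 F) x - omul x (oe1 F) + omul (omul (oe1 F) x) (oe1 F).
  by rewrite !memvD ?memvN ?Bsub.
by rewrite /x /oe1 /oe2 !omul_oct !octN !octD octZ; oct_ring.
Qed.

Lemma e2_mem_normal_form : oe2 F \in B -> (3 <= \dim B)%N ->
  exists2 h, is_G2 h &
    in_image h B (oe1 F) /\ in_image h B (oe2 F) /\ in_image h B (ou1 F).
Proof.
move=> e2B dimB; have [y yB] := exists_notin_span2 (oe1 F) (oe2 F) dimB.
elim/oct_ind: y yB => a u1 u2 u3 v1 v2 v3 b yB /notin_span_e1e2 [u_neq0 | v_neq0].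
- have [b1 [b2 [b3 [c1 [c2 [c3 d_neq0]]]]]] := exists_det3_neq0 u_neq0.
  exists (frame_map u1 u2 u3 b1 b2 b3 c1 c2 c3); first exact: frame_map_G2.
  split; [|split]; [exists (oe1 F) | exists (oe2 F) | exists (ouvec u1 u2 u3)];
    rewrite ?frame_map_oe1 ?frame_map_oe2 ?frame_map_ouvec //; exact: ouvec_mem yB.
- have nv_neq0 : nonzero3 (- v1) (- v2) (- v3) by rewrite /nonzero3 !oppr_eq0.
  have [b1 [b2 [b3 [c1 [c2 [c3 d_neq0]]]]]] := exists_det3_neq0 nv_neq0.
  exists (frame_map (- v1) (- v2) (- v3) b1 b2 b3 c1 c2 c3 \o oswap (F:=F)).
    exact: is_G2_comp (oswap_G2 F) (frame_map_G2 d_neq0).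
  split; [|split]; [exists (oe2 F) | exists (oe1 F) | exists (ovvec v1 v2 v3)];
    rewrite /= ?oswap_oe1 ?oswap_oe2 ?oswap_ovvec ?frame_map_oe1 ?frame_map_oe2
      ?frame_map_ouvec //; exact: ovvec_mem yB.
Qed.

Lemma exists_ovvec_of_ouvec_mem (u1 u2 u3 : F) : oe2 F \notin B -> (3 <= \dim B)%N ->
  nonzero3 u1 u2 u3 -> ouvec u1 u2 u3 \in B ->
  exists v1 v2 v3, nonzero3 v1 v2 v3 /\ ovvec v1 v2 v3 \in B.
Proof.
move=> e2B dimB u_neq0 uB.
have [z zB] := exists_notin_span2 (oe1 F) (ouvec u1 u2 u3) dimB.
elim/oct_ind: z zB => a w1 w2 w3 v1 v2 v3 b zB z_notin.
have [v_neq0 | /nonzero3Fn [v10 v20 v30]] := boolP (nonzero3 v1 v2 v3).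
  by exists v1, v2, v3; split=> //; exact: ovvec_mem zB.
have uwB := Bsub uB (ouvec_mem zB); rewrite omul_ouvec in uwB.
have [uw_neq0 | /nonzero3Fn [uw10 uw20 uw30]] := boolP (nonzero3 (cross1 u1 u2 u3 w1 w2 w3)
    (cross2 u1 u2 u3 w1 w2 w3) (cross3 u1 u2 u3 w1 w2 w3)).
  by do 3 eexists; split; [exact: uw_neq0 | exact: uwB].
have [k [w1E w2E w3E]] := cross_eq0_parallel u_neq0 uw10 uw20 uw30.
case/negP: z_notin; rewrite w1E w2E w3E v10 v20 v30 (memvZ_notin_eq0 e2B (scale_oe2_mem zB)).
have -> : oct a (k * u1) (k * u2) (k * u3) 0 0 0 0 = a *: oe1 F + k *: ouvec u1 u2 u3.
  by rewrite /oe1 /ouvec !octZ octD; oct_ring.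
exact: memv_span2.
Qed.

Lemma exists_ouvec_of_ovvec_mem (v1 v2 v3 : F) : oe2 F \notin B -> (3 <= \dim B)%N ->
  nonzero3 v1 v2 v3 -> ovvec v1 v2 v3 \in B ->
  exists u1 u2 u3, nonzero3 u1 u2 u3 /\ ouvec u1 u2 u3 \in B.
Proof.
move=> e2B dimB v_neq0 vB.
have [z zB] := exists_notin_span2 (oe1 F) (ovvec v1 v2 v3) dimB.
elim/oct_ind: z zB => a u1 u2 u3 w1 w2 w3 b zB z_notin.
have [u_neq0 | /nonzero3Fn [u10 u20 u30]] := boolP (nonzero3 u1 u2 u3).
  by exists u1, u2, u3; split=> //; exact: ouvec_mem zB.
have vwB := Bsub (ovvec_mem zB) vB; rewrite omul_ovvec in vwB.
have [vw_neq0 | /nonzero3Fn [vw10 vw20 vw30]] := boolP (nonzero3 (cross1 v1 v2 v3 w1 w2 w3)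
    (cross2 v1 v2 v3 w1 w2 w3) (cross3 v1 v2 v3 w1 w2 w3)).
  by do 3 eexists; split; [exact: vw_neq0 | exact: vwB].
have [k [w1E w2E w3E]] := cross_eq0_parallel v_neq0 vw10 vw20 vw30.
case/negP: z_notin; rewrite w1E w2E w3E u10 u20 u30 (memvZ_notin_eq0 e2B (scale_oe2_mem zB)).
have -> : oct a 0 0 0 (k * v1) (k * v2) (k * v3) 0 = a *: oe1 F + k *: ovvec v1 v2 v3.
  by rewrite /oe1 /ovvec !octZ octD; oct_ring.
exact: memv_span2.
Qed.

Lemma exists_ouvec_ovvec_mem : oe2 F \notin B -> (3 <= \dim B)%N ->
  exists u1 u2 u3 v1 v2 v3, [/\ nonzero3 u1 u2 u3, nonzero3 v1 v2 v3,
    ouvec u1 u2 u3 \in B & ovvec v1 v2 v3 \in B].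
Proof.
move=> e2B dimB; have [y yB] := exists_notin_span2 (oe1 F) (oe2 F) dimB.
elim/oct_ind: y yB => a u1 u2 u3 v1 v2 v3 b yB /notin_span_e1e2 [u_neq0 | v_neq0].
- have [w1 [w2 [w3 [w_neq0 wB]]]] := exists_ovvec_of_ouvec_mem e2B dimB u_neq0 (ouvec_mem yB).
  by exists u1, u2, u3, w1, w2, w3; split=> //; exact: ouvec_mem yB.
- have [w1 [w2 [w3 [w_neq0 wB]]]] := exists_ouvec_of_ovvec_mem e2B dimB v_neq0 (ovvec_mem yB).
  by exists w1, w2, w3, v1, v2, v3; split=> //; exact: ovvec_mem yB.
Qed.

Lemma e2_notin_normal_form : oe2 F \notin B -> (3 <= \dim B)%N ->
  exists2 h, is_G2 h &
    in_image h B (oe1 F) /\ in_image h B (ou1 F) /\ in_image h B (ov2 F).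
Proof.
move=> e2B dimB.
have [u1 [u2 [u3 [v1 [v2 [v3 [u_neq0 v_neq0 uB vB]]]]]]] := exists_ouvec_ovvec_mem e2B dimB.
have uv0 : dot3 u1 u2 u3 v1 v2 v3 = 0.
  by have := Bsub vB uB; rewrite omul_ovvec_ouvec => /scale_oe2_mem/(memvZ_notin_eq0 e2B).
have [b1 [b2 [b3 [c1 [c2 [c3 [d_neq0 bv_neq0 cv0]]]]]]] := exists_det3_orth u_neq0 v_neq0 uv0.
have Gh := frame_map_G2 d_neq0.
exists (frame_map u1 u2 u3 b1 b2 b3 c1 c2 c3) => //.
split; [|split]; [exists (oe1 F) | exists (ouvec u1 u2 u3) |
  exists ((det3 u1 u2 u3 b1 b2 b3 c1 c2 c3 / dot3 b1 b2 b3 v1 v2 v3) *: ovvec v1 v2 v3)];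
  rewrite ?frame_map_oe1 ?frame_map_ouvec ?memvZ //.
rewrite is_G2Z // frame_map_ovvec uv0 cv0 /ovvec /ov2 octZ; congr oct; rewrite ?mulr0 //.
by field; rewrite d_neq0 bv_neq0.
Qed.

Lemma subalgebra_e1_normal_form : (3 <= \dim B)%N ->
  exists2 h, is_G2 h &
    (in_image h B (oe1 F) /\ in_image h B (oe2 F) /\ in_image h B (ou1 F)) \/
    (in_image h B (oe1 F) /\ in_image h B (ou1 F) /\ in_image h B (ov2 F)).
Proof.
move=> dimB; have [e2B | e2B] := boolP (oe2 F \in B).
- by have [h Gh hB] := e2_mem_normal_form e2B dimB; exists h; [|left].
- by have [h Gh hB] := e2_notin_normal_form e2B dimB; exists h; [|right].
Qed.

End SubalgebraContainingE1.

Unset Implicit Arguments.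
Theorem lemma6p11 (F : closedFieldType) (A : {vspace 'rV[F]_8}) :
  (2 \in [pchar F])%N ->
  is_subalgebra A ->
  (exists2 x, x \in A & otr x != 0) ->
  (3 <= \dim A)%N ->
  exists g : 'rV[F]_8 -> 'rV[F]_8, is_G2 g /\
    ((in_image g A (oe1 F) /\ in_image g A (oe2 F) /\ in_image g A (ou1 F)) \/
     (in_image g A (oe1 F) /\ in_image g A (ou1 F) /\ in_image g A (ov2 F))).
Proof.
move=> char2 Asub [x xA trx] dimA.
have [e eA [ee tre]] := char2_exists_trace1_idempotent char2 Asub xA trx.
have [g Gg ge] := idempotent_conj_e1 ee tre.
have [B [Bsub dimB gB gB_A]] := G2_image_subalgebra Gg Asub.
have e1B : oe1 F \in B by rewrite -ge gB.
have dimB3 : (3 <= \dim B)%N by rewrite dimB.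
have [h Gh hB] := subalgebra_e1_normal_form Bsub e1B dimB3.
exists (h \o g); split; first exact: is_G2_comp Gg Gh.
by case: hB => [[? [? ?]] | [? [? ?]]]; [left | right]; split; try split; apply: gB_A.
Qed.
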